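(* Let $G=(V,E)$ be a finite connected chordal (decomposable) graph with $V=\{1,\dots,n\}$, and let $(C_1,\dots,C_k)$ be a perfect ordering of its cliques. For $q=2,\dots,k$ let $H_q=C_1\cup\dots\cup C_q$ (with $H_1=C_1$), $S_q=C_q\cap H_{q-1}$, $A_q=H_{q-1}\setminus S_q$ and $B_q=C_q\setminus S_q$. Let $N$ be a symmetric positive definite $n\times n$ real matrix and $M=N_G$. Then $M$ is positive definite if and only if for every $2\le q\le k$, $$S_1^{(q)}+S_2^{(q)}-M_{S_qS_q}$$ is positive definite, where $S_1^{(q)}=M_{S_qS_q}-M_{S_qA_q}M_{A_qA_q}^{-1}M_{A_qS_q}$ and $S_2^{(q)}=M_{S_qS_q}-M_{S_qB_q}M_{B_qB_q}^{-1}M_{B_qS_q}$.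
   Context: A graph is chordal (decomposable) if it has no induced cycle of length $\ge 4$. A clique is a maximal complete induced subgraph (identified with its vertex set). An ordering $(C_1,\dots,C_k)$ of the cliques is perfect if for every $q=2,\dots,k$ there exists $p\le q-1$ with $C_q\cap (C_1\cup\dots\cup C_{q-1})\subseteq C_p$. For a symmetric $n\times n$ real matrix $N=(n_{ij})$, $N_G$ is defined by $(N_G)_{ij}=n_{ij}$ if $i=j$ or $(i,j)\in E$, and $0$ otherwise. For $X,Y\subseteq V$, $M_{XY}$ is the submatrix of $M$ with rows in $X$ and columns in $Y$. *)

From HB Require Import structures.
From mathcomp Require Import all_boot all_order all_algebra.
Set Implicit Arguments. Unset Strict Implicit. Unset Printing Implicit Defensive.
Import Order.TTheory GRing.Theory Num.Theory.
Local Open Scope ring_scope.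

(* Simple graph on V = 'I_n (vertices 0..n-1 stand for 1..n): a symmetric,
   irreflexive relation e. *)
Definition simple_graph n (e : rel 'I_n) :=
  symmetric e /\ irreflexive e.

Definition connected_graph n (e : rel 'I_n) :=
  forall x y : 'I_n, connect e x y.

Definition induced_cycle n (e : rel 'I_n) (p : seq 'I_n) :=
  [/\ 4 <= size p, uniq p &
      {in p &, forall x y, e x y = (y == next p x) || (x == next p y)}]%N.

Definition chordal n (e : rel 'I_n) :=
  ~ exists p : seq 'I_n, induced_cycle e p.

Definition complete_set n (e : rel 'I_n) (X : {set 'I_n}) :=
  [forall x in X, forall y in X, (x != y) ==> e x y].

Definition is_clique n (e : rel 'I_n) (C : {set 'I_n}) :=
  maxset (complete_set e) C.

Definition clique_ordering n (e : rel 'I_n) (s : seq {set 'I_n}) :=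
  uniq s /\ (forall C, C \in s <-> is_clique e C).

Definition Hun n (s : seq {set 'I_n}) (q : nat) : {set 'I_n} :=
  \bigcup_(i < q) nth set0 s i.

(* perfect ordering (0-based: the q-th clique is nth set0 s q) *)
Definition perfect_ordering n (e : rel 'I_n) (s : seq {set 'I_n}) :=
  clique_ordering e s /\
  forall q, (1 <= q < size s)%N ->
    exists2 p, (p < q)%N & nth set0 s q :&: Hun s q \subset nth set0 s p.

(* separator, and the two residual sets, for 0-based index q >= 1 *)
Definition Sep n (s : seq {set 'I_n}) q := nth set0 s q :&: Hun s q.
Definition Aset n (s : seq {set 'I_n}) q := Hun s q :\: Sep s q.
Definition Bset n (s : seq {set 'I_n}) q := nth set0 s q :\: Sep s q.

Definition restrict_graph (R : ringType) n (e : rel 'I_n) (N : 'M[R]_n) : 'M[R]_n :=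
  \matrix_(i, j) (if (i == j) || e i j then N i j else 0).

Definition submx_set (R : Type) n (M : 'M[R]_n) (X Y : {set 'I_n})
  : 'M[R]_(#|X|, #|Y|) :=
  \matrix_(i, j) M (enum_val i) (enum_val j).

Definition posdef (R : numDomainType) m (A : 'M[R]_m) :=
  A^T = A /\ forall x : 'cV[R]_m, x != 0 -> 0 < (x^T *m A *m x) 0 0.

From mathcomp Require Import all_boot all_order all_algebra lra.
Set Implicit Arguments. Unset Strict Implicit. Unset Printing Implicit Defensive.
Import Order.TTheory GRing.Theory Num.Theory.

(* Write H_{q+1} as the disjoint union of A_q, S_q and B_q.  In a perfect
   ordering no edge joins A_q to B_q, so M_{A_q B_q} = 0, and completing the
   squares in the A_q- and B_q-coordinates splits the quadratic form of M on
   H_{q+1} into its forms on A_q and on B_q plus the form of the generalized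
   Schur complement M_SS - M_SA M_AA^-1 M_AS - M_SB M_BB^-1 M_BS, which is
   S_1 + S_2 - M_SS.  Since M is positive definite on H_q (hence on A_q) and
   on the clique C_q, where it agrees with N (hence on B_q), M is positive
   definite on H_{q+1} iff that complement is; induct on q from H_1 = C_1. *)

Section CliqueOrdering.
Variables (n : nat) (e : rel 'I_n) (s : seq {set 'I_n}).

Lemma HunP x q :
  reflect (exists2 i, i < q & x \in nth set0 s i) (x \in Hun s q).
Proof.
apply: (iffP bigcupP) => [[i _ xi]|[i iq xi]]; first by exists i.
by exists (Ordinal iq).
Qed.

Lemma subset_Hun q r : q <= r -> Hun s q \subset Hun s r.
Proof.
move=> le_qr; apply/subsetP => x /HunP [i iq xi]; apply/HunP.
by exists i; first exact: leq_trans le_qr.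
Qed.

Lemma HunS_partition q : Hun s q.+1 = Aset s q :|: Sep s q :|: Bset s q.
Proof.
apply/setP => x; rewrite /Hun big_ord_recr /= /Aset /Bset /Sep !inE.
by case: (x \in \bigcup_(i < q) _); case: (x \in nth set0 s q).
Qed.

Lemma disjoint_Aset_Sep q : [disjoint Aset s q & Sep s q].
Proof.
rewrite -setI_eq0; apply/eqP/setP => x; rewrite /Aset /Sep !inE.
by case: (x \in Hun s q); case: (x \in nth set0 s q).
Qed.

Lemma disjoint_Aset_Bset q : [disjoint Aset s q & Bset s q].
Proof.
rewrite -setI_eq0; apply/eqP/setP => x; rewrite /Aset /Bset /Sep !inE.
by case: (x \in Hun s q); case: (x \in nth set0 s q).
Qed.

Lemma disjoint_Sep_Bset q : [disjoint Sep s q & Bset s q].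
Proof.
rewrite -setI_eq0; apply/eqP/setP => x; rewrite /Bset /Sep !inE.
by case: (x \in Hun s q); case: (x \in nth set0 s q).
Qed.

Lemma Aset_sub_Hun q : Aset s q \subset Hun s q.
Proof. exact: subsetDl. Qed.

Lemma Bset_sub_nth q : Bset s q \subset nth set0 s q.
Proof. exact: subsetDl. Qed.

Hypothesis po : perfect_ordering e s.

Lemma complete_sub_nth X : complete_set e X ->
  exists2 r, r < size s & X \subset nth set0 s r.
Proof.
move=> cX; have [C /(po.1.2 C) Cs sXC] := maxset_exists cX.
by exists (index C s); rewrite ?index_mem ?nth_index.
Qed.

Lemma complete_nth q : q < size s -> complete_set e (nth set0 s q).
Proof. by move=> qs; apply/maxsetp/(po.1.2 _)/mem_nth. Qed.

Lemma Hun_sizeT : Hun s (size s) = setT.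
Proof.
apply/setP => x; rewrite inE; have cx : complete_set e [set x].
  by apply/forall_inP => y /set1P ->; apply/forall_inP => z /set1P ->; rewrite eqxx.
have [r rs /subsetP sxr] := complete_sub_nth cx.
by apply/HunP; exists r; rewrite ?sxr ?set11.
Qed.

Lemma size_cliques_gt0 : 0 < size s.
Proof.
have c0 : complete_set e set0 by apply/forall_inP => y; rewrite inE.
by have [r rs _] := complete_sub_nth c0; apply: leq_ltn_trans rs.
Qed.

Hypothesis e_sym : symmetric e.

Lemma Aset_Bset_nonadjacent q a b : 1 <= q < size s ->
  a \in Aset s q -> b \in Bset s q -> ~~ e a b.
Proof.
move=> /andP[q_gt0 qs] /setDP[aH aS] /setDP[bC bS].
have aC : a \notin nth set0 s q by apply: contra aS => aC; rewrite inE aC.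
have bH : b \notin Hun s q by apply: contra bS => bH; rewrite inE bC.
apply/negP => eab.
have cab : complete_set e [set a; b].
  have eba : e b a by rewrite e_sym.
  by apply/forall_inP => x /set2P[]->; apply/forall_inP => y /set2P[]->;
    rewrite ?eqxx ?eab ?eba ?implybT.
have exr : exists r, (r < size s) && ([set a; b] \subset nth set0 s r).
  by have [r rs sub] := complete_sub_nth cab; exists r; rewrite rs.
(* the first clique C_r containing a and b: r > q is impossible since then
   both lie in C_r :&: H_r, which is contained in an earlier clique *)
case: (ex_minnP exr) => r /andP[rs /subsetP sub] r_min.
have [ar br] : a \in nth set0 s r /\ b \in nth set0 s r by rewrite !sub ?set21 ?set22.
case: (ltngtP r q) => [rq|qr|rq].
- by move: bH => /negP; apply; apply/HunP; exists r.
- have r_gt0 : 1 <= r < size s by rewrite rs (leq_trans q_gt0 (ltnW qr)).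
  have [p pr /subsetP sep] := po.2 r r_gt0.
  have aHr : a \in Hun s r by apply: subsetP (subset_Hun (ltnW qr)) _ _.
  have bHr : b \in Hun s r by apply/HunP; exists q.
  suff : r <= p by rewrite leqNgt pr.
  apply: r_min; rewrite (ltn_trans pr rs) /=.
  by apply/subsetP => x /set2P[]->; rewrite sep // inE ?ar ?br.
- by move: aC; rewrite -rq ar.
Qed.
End CliqueOrdering.

Local Open Scope ring_scope.

Lemma mx_entryD (V : zmodType) m p (A B : 'M[V]_(m, p)) i j :
  (A + B) i j = A i j + B i j.
Proof. by rewrite !mxE. Qed.

Lemma mx_entryN (V : zmodType) m p (A : 'M[V]_(m, p)) i j : (- A) i j = - A i j.
Proof. by rewrite !mxE. Qed.

Section CoordinateInclusion.
Variables (R : pzRingType) (n : nat).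
Implicit Types X Y : {set 'I_n}.

Definition incl_mx X : 'M[R]_(n, #|X|) := colsub enum_val 1%:M.

Definition supported X (u : 'cV[R]_n) :=
  forall i, i \notin X -> u i 0 = 0.

Lemma submx_setE (M : 'M[R]_n) X Y :
  submx_set M X Y = (incl_mx X)^T *m M *m incl_mx Y.
Proof.
rewrite trmx_mxsub trmx1 -rowsubE mulmx_colsub mulmx1.
by apply/matrixP => i j; rewrite !mxE.
Qed.

Lemma trmx_incl_mx_mul X m (A : 'M[R]_(n, m)) :
  (incl_mx X)^T *m A = rowsub enum_val A.
Proof. by rewrite trmx_mxsub trmx1 -rowsubE. Qed.

Lemma incl_mxTK X : (incl_mx X)^T *m incl_mx X = 1%:M.
Proof.
rewrite trmx_incl_mx_mul; apply/matrixP => i j.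
by rewrite !mxE (inj_eq enum_val_inj).
Qed.

Lemma incl_mxT_disjoint X Y :
  [disjoint X & Y] -> (incl_mx X)^T *m incl_mx Y = 0.
Proof.
move=> dXY; rewrite trmx_incl_mx_mul; apply/matrixP => i j; rewrite !mxE.
case: eqP => [eij|]; last by rewrite mulr0n.
by move: dXY => /disjointFr /(_ (enum_valP i)); rewrite eij enum_valP.
Qed.

Lemma supported_incl_mx X (z : 'cV[R]_#|X|) : supported X (incl_mx X *m z).
Proof.
move=> i iX; rewrite mxE big1 // => k _; rewrite !mxE.
by case: eqP => [eik|]; [move: iX; rewrite eik enum_valP | rewrite mulr0n mul0r].
Qed.

Lemma incl_mx_restrictE X (u : 'cV[R]_n) i :
  (incl_mx X *m ((incl_mx X)^T *m u)) i 0 = if i \in X then u i 0 else 0.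
Proof.
case: ifPn => iX; last exact: supported_incl_mx.
rewrite trmx_incl_mx_mul mxE (bigD1 (enum_rank_in iX i)) //= big1.
  by rewrite !mxE enum_rankK_in // eqxx mul1r addr0.
move=> k /negbTE nk; rewrite !mxE -(enum_rankK_in iX iX) (inj_eq enum_val_inj).
by rewrite eq_sym nk mul0r.
Qed.

End CoordinateInclusion.
Arguments incl_mx {R n} X.

Section QuadraticForm.
Variables (R : realFieldType) (n : nat) (M : 'M[R]_n).
Implicit Types (X Y A S B : {set 'I_n}) (u v w : 'cV[R]_n).

Definition bform u v := (u^T *m M *m v) 0 0.

Definition posdef_on X := forall u, supported X u -> u != 0 -> 0 < bform u u.

Lemma bformDl u v w : bform (u + v) w = bform u w + bform v w.
Proof. by rewrite /bform linearD !mulmxDl mxE. Qed.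
Lemma bformDr u v w : bform w (u + v) = bform w u + bform w v.
Proof. by rewrite /bform mulmxDr mxE. Qed.
Lemma bformNl u w : bform (- u) w = - bform u w.
Proof. by rewrite /bform linearN !mulNmx mxE. Qed.
Lemma bformNr u w : bform w (- u) = - bform w u.
Proof. by rewrite /bform mulmxN mxE. Qed.
Lemma bform0l w : bform 0 w = 0.
Proof. by rewrite /bform linear0 !mul0mx mxE. Qed.

Lemma bform_sum u v : bform u v = \sum_i \sum_j u i 0 * M i j * v j 0.
Proof.
rewrite /bform mxE exchange_big; apply: eq_bigr => j _; rewrite mxE big_distrl.
by apply: eq_bigr => i _; rewrite mxE.
Qed.

Lemma bform_eq0_supported X Y u w :
  (forall i j, i \in X -> j \in Y -> M i j = 0) ->
  supported X u -> supported Y w -> bform u w = 0.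
Proof.
move=> MXY0 uX wY; rewrite bform_sum big1 // => i _; rewrite big1 // => j _.
have [iX|/uX->] := boolP (i \in X); last by rewrite !mul0r.
have [jY|/wY->] := boolP (j \in Y); last by rewrite mulr0.
by rewrite MXY0 // mulr0 mul0r.
Qed.

Lemma posdef_onS X Y : X \subset Y -> posdef_on Y -> posdef_on X.
Proof.
move=> sXY pdY u uX; apply: pdY => i iY; apply: uX.
by apply: contra iY; apply: (subsetP sXY).
Qed.

Lemma posdef_on_ge0 X u : posdef_on X -> supported X u -> 0 <= bform u u.
Proof.
move=> pdX uX; have [->|u0] := eqVneq u 0; first by rewrite bform0l.
exact/ltW/pdX.
Qed.

Lemma unitmx_submx_set X : posdef_on X -> submx_set M X X \in unitmx.
Proof.
move=> pdX; rewrite unitmxE unitfE submx_setE; apply/negP => /det0P[v v0 vM0].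
have Pv0 : incl_mx X *m v^T != 0.
  apply: contra v0 => /eqP Pv0.
  by rewrite -(trmxK v) -[v^T]mul1mx -(incl_mxTK R X) -mulmxA Pv0 mulmx0 linear0.
have := pdX _ (supported_incl_mx _) Pv0.
by rewrite /bform trmx_mul trmxK !mulmxA -(mulmxA v) -(mulmxA v) vM0 mul0mx mxE ltxx.
Qed.

(* the M-orthogonal projection of v onto the vectors supported on X *)
Definition mproj X v :=
  incl_mx X *m (invmx (submx_set M X X) *m ((incl_mx X)^T *m M *m v)).

Lemma mproj0 X : mproj X 0 = 0.
Proof. by rewrite /mproj !mulmx0. Qed.

Lemma bform_mproj X z v : posdef_on X ->
  bform (incl_mx X *m z) (mproj X v) = bform (incl_mx X *m z) v.
Proof.
move=> pdX; rewrite /bform; have -> : (incl_mx X *m z)^T *m M *m mproj X v =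
    z^T *m (submx_set M X X *m invmx (submx_set M X X)) *m ((incl_mx X)^T *m M *m v).
  by rewrite /mproj submx_setE trmx_mul !mulmxA.
by rewrite mulmxV ?unitmx_submx_set // mulmx1 trmx_mul !mulmxA.
Qed.

Definition schur_mx A S B : 'M[R]_#|S| :=
  submx_set M S S - submx_set M S A *m invmx (submx_set M A A) *m submx_set M A S
  - submx_set M S B *m invmx (submx_set M B B) *m submx_set M B S.

Lemma schur_mx_bform A S B x : let v := incl_mx S *m x in
  (x^T *m schur_mx A S B *m x) 0 0
  = bform v v - bform v (mproj A v) - bform v (mproj B v).
Proof.
rewrite /schur_mx /bform /mproj !mulmxBr !mulmxBl !(mx_entryD, mx_entryN) !submx_setE.
by rewrite !trmx_mul !mulmxA.
Qed.

Hypothesis M_sym : M^T = M.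

Lemma trmx_submx_set X Y : (submx_set M X Y)^T = submx_set M Y X.
Proof. by apply/matrixP => i j; rewrite !mxE -[M in LHS]M_sym mxE. Qed.

Lemma schur_mx_sym A S B : (schur_mx A S B)^T = schur_mx A S B.
Proof.
by rewrite /schur_mx !linearB /= !trmx_mul !trmx_inv !trmx_submx_set !mulmxA.
Qed.

Lemma bformC u v : bform u v = bform v u.
Proof.
have tr11 (A : 'M[R]_1) : A 0 0 = A^T 0 0 by rewrite mxE.
by rewrite /bform tr11 !trmx_mul trmxK M_sym mulmxA.
Qed.

Section SchurComplement.
Variables A S B : {set 'I_n}.
Hypotheses (dAS : [disjoint A & S]) (dAB : [disjoint A & B]) (dSB : [disjoint S & B]).
Hypothesis MAB0 : forall i j, i \in A -> j \in B -> M i j = 0.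
Hypotheses (pdA : posdef_on A) (pdB : posdef_on B).

(* the change of variables that diagonalizes the form of M on A :|: S :|: B *)
Definition schur_lift a b x : 'cV[R]_n :=
  incl_mx A *m a - mproj A (incl_mx S *m x)
  + (incl_mx B *m b - mproj B (incl_mx S *m x)) + incl_mx S *m x.

Lemma bform_schur_lift a b x :
  bform (schur_lift a b x) (schur_lift a b x) = bform (incl_mx A *m a) (incl_mx A *m a)
    + bform (incl_mx B *m b) (incl_mx B *m b) + (x^T *m schur_mx A S B *m x) 0 0.
Proof.
rewrite schur_mx_bform /schur_lift; set v := incl_mx S *m x.
set a' := incl_mx A *m a; set b' := incl_mx B *m b.
set pa := mproj A v; set pb := mproj B v.
have a'pa : bform a' pa = bform a' v := bform_mproj _ _ pdA.
have pa2 : bform pa pa = bform pa v := bform_mproj _ _ pdA.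
have b'pb : bform b' pb = bform b' v := bform_mproj _ _ pdB.
have pb2 : bform pb pb = bform pb v := bform_mproj _ _ pdB.
have AB0 (a1 : 'cV_#|A|) (b1 : 'cV_#|B|) :
    bform (incl_mx A *m a1) (incl_mx B *m b1) = 0.
  by apply: bform_eq0_supported MAB0 _ _; apply: supported_incl_mx.
have a'b' : bform a' b' = 0 := AB0 a b.
have a'pb : bform a' pb = 0 := AB0 a _.
have pab' : bform pa b' = 0 := AB0 _ b.
have papb : bform pa pb = 0 := AB0 _ _.
move: (bformC a' b') (bformC a' pb) (bformC pa b') (bformC pa pb) (bformC a' pa).
move: (bformC b' pb) (bformC a' v) (bformC b' v) (bformC pa v) (bformC pb v).
rewrite !(bformDl, bformDr, bformNl, bformNr); lra.
Qed.

Lemma supported_schur_lift a b x : supported (A :|: S :|: B) (schur_lift a b x).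
Proof.
move=> i; rewrite !inE => /norP[/norP[iA iS] iB].
by rewrite !(mx_entryD, mx_entryN) !supported_incl_mx // !oppr0 !addr0.
Qed.

Lemma schur_lift_coord a b x : (incl_mx S)^T *m schur_lift a b x = x.
Proof.
rewrite /schur_lift /mproj !(mulmxDr, mulmxN) !mulmxA incl_mxTK mul1mx.
by rewrite !incl_mxT_disjoint ?(mul0mx, oppr0, add0r) // disjoint_sym.
Qed.

Lemma schur_liftP u : supported (A :|: S :|: B) u ->
  exists a b x, u = schur_lift a b x.
Proof.
move=> uU; set x := (incl_mx S)^T *m u; set v := incl_mx S *m x.
pose restr X := incl_mx X *m ((incl_mx X)^T *m u).
have u_split : u = restr A + restr B + v.
  apply/matrixP => i j; rewrite (ord1 j) !mx_entryD !incl_mx_restrictE.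
  have [iA|iA] := boolP (i \in A).
    by rewrite (disjointFr dAB iA) (disjointFr dAS iA) !addr0.
  have [iB|iB] := boolP (i \in B).
    by rewrite (disjointFl dSB iB) addr0 add0r.
  have [iS|iS] := boolP (i \in S); first by rewrite !add0r.
  by rewrite uU ?addr0 // !inE (negbTE iA) (negbTE iB) (negbTE iS).
exists ((incl_mx A)^T *m u + invmx (submx_set M A A) *m ((incl_mx A)^T *m M *m v)).
exists ((incl_mx B)^T *m u + invmx (submx_set M B B) *m ((incl_mx B)^T *m M *m v)).
by exists x; rewrite /schur_lift /mproj !mulmxDr !addrK -/v {1}u_split.
Qed.

Lemma posdef_on_schur : posdef_on (A :|: S :|: B) <-> posdef (schur_mx A S B).
Proof.
split=> [pdU | [_ pdT] u uU u0].
  split=> [|x x0]; first exact: schur_mx_sym.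
  have := pdU _ (supported_schur_lift 0 0 x).
  rewrite bform_schur_lift !mulmx0 !bform0l !add0r; apply.
  by apply: contra x0 => /eqP u0; rewrite -(schur_lift_coord 0 0 x) u0 mulmx0.
move: u0; have [a [b [x ->]]] := schur_liftP uU; rewrite bform_schur_lift.
have ge0A := posdef_on_ge0 pdA (supported_incl_mx a).
have ge0B := posdef_on_ge0 pdB (supported_incl_mx b).
have [x0|x0 _] := eqVneq x 0; last by have := pdT x x0; lra.
rewrite x0 /schur_lift mulmx0 !mproj0 trmx0 !mul0mx mxE !subr0 !addr0.
have [->|a0 _] := eqVneq (incl_mx A *m a) 0.
  by rewrite add0r bform0l => b0; have := pdB (supported_incl_mx b) b0; lra.
by have := pdA (supported_incl_mx a) a0; lra.
Qed.

End SchurComplement.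
End QuadraticForm.

Lemma posdef_on_setT (R : realFieldType) n (M : 'M[R]_n) :
  M^T = M -> posdef M <-> posdef_on M setT.
Proof.
move=> M_sym; split=> [[_ pdM] u _|pdM]; first exact: pdM.
by split=> // u; apply: pdM => i; rewrite inE.
Qed.

Lemma restrict_graph_sym (R : nzRingType) n (e : rel 'I_n) (N : 'M[R]_n) :
  symmetric e -> N^T = N -> (restrict_graph e N)^T = restrict_graph e N.
Proof.
move=> e_sym N_sym; apply/matrixP => i j; rewrite !mxE eq_sym e_sym.
by rewrite -[N in LHS]N_sym mxE.
Qed.

Lemma posdef_on_complete (R : realFieldType) n (e : rel 'I_n) (N : 'M[R]_n) C :
  posdef N -> complete_set e C -> posdef_on (restrict_graph e N) C.
Proof.
move=> [_ pdN] /forall_inP cC u uC u0.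
suff -> : bform (restrict_graph e N) u u = bform N u u by apply: pdN.
rewrite !bform_sum; apply: eq_bigr => i _; apply: eq_bigr => j _.
have [iC|/uC->] := boolP (i \in C); last by rewrite !mul0r.
have [jC|/uC->] := boolP (j \in C); last by rewrite !mulr0.
rewrite mxE; case: eqVneq => //= ij.
by move/forall_inP: (cC i iC) => /(_ j jC); rewrite ij /= => ->.
Qed.

Section PerfectOrderingPosdef.
Variables (R : realFieldType) (n : nat) (e : rel 'I_n) (s : seq {set 'I_n}).
Variable N : 'M[R]_n.
Hypotheses (e_sym : symmetric e) (po : perfect_ordering e s) (pdN : posdef N).

Local Notation M := (restrict_graph e N).

Lemma posdef_on_Hun1 : posdef_on M (Hun s 1).
Proof.
rewrite /Hun big_ord1; apply: posdef_on_complete pdN _.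
exact: (complete_nth po (size_cliques_gt0 po)).
Qed.

Lemma posdef_on_HunS q : (1 <= q < size s)%N -> posdef_on M (Hun s q) ->
  posdef_on M (Hun s q.+1) <-> posdef (schur_mx M (Aset s q) (Sep s q) (Bset s q)).
Proof.
move=> q_range pdH; rewrite HunS_partition.
apply: posdef_on_schur.
- exact: restrict_graph_sym pdN.1.
- exact: disjoint_Aset_Sep.
- exact: disjoint_Aset_Bset.
- exact: disjoint_Sep_Bset.
- move=> i j iA jB; have ij : i != j.
    by apply: contraTneq jB => <-; rewrite (disjointFr (disjoint_Aset_Bset s q) iA).
  by rewrite mxE (negbTE ij) (negbTE (Aset_Bset_nonadjacent po e_sym q_range iA jB)).
- exact: posdef_onS (Aset_sub_Hun s q) pdH.
- apply: posdef_onS (Bset_sub_nth s q) _; apply: posdef_on_complete pdN _.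
  by apply: (complete_nth po); case/andP: q_range.
Qed.

Lemma posdef_on_Hun :
  (forall q, (1 <= q < size s)%N ->
     posdef (schur_mx M (Aset s q) (Sep s q) (Bset s q))) ->
  forall q, (1 <= q <= size s)%N -> posdef_on M (Hun s q).
Proof.
move=> pdT; elim=> // -[_ _|q IH /andP[_ qs]]; first exact: posdef_on_Hun1.
have q_range : (1 <= q.+1 < size s)%N by [].
by apply/(posdef_on_HunS q_range (IH (ltnW qs))); apply: pdT.
Qed.

End PerfectOrderingPosdef.

Theorem theorem6 (R : realFieldType) (n : nat) (e : rel 'I_n)
  (s : seq {set 'I_n}) (N : 'M[R]_n) :
  simple_graph e -> connected_graph e -> chordal e ->
  perfect_ordering e s ->
  posdef N ->
  let M := restrict_graph e N in
  posdef M <->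
  (forall q, (1 <= q < size s)%N ->
     let S := Sep s q in let A := Aset s q in let B := Bset s q in
     let S1 := submx_set M S S - submx_set M S A *m invmx (submx_set M A A)
                                   *m submx_set M A S in
     let S2 := submx_set M S S - submx_set M S B *m invmx (submx_set M B B)
                                   *m submx_set M B S in
     posdef (S1 + S2 - submx_set M S S)).
Proof.
move=> [e_sym _] _ _ po pdN M.
have schurE (V : zmodType) (x y z : V) : x - y + (x - z) - x = x - y - z.
  by rewrite addrC addrA addKr addrC addrAC.
rewrite (posdef_on_setT (restrict_graph_sym e_sym pdN.1)); split.
  move=> pdM q q_range; rewrite /= schurE.
  by apply/(posdef_on_HunS e_sym po pdN q_range); apply: posdef_onS (subsetT _) pdM.
move=> pdT; rewrite -(Hun_sizeT po).
apply: (posdef_on_Hun e_sym po pdN) => [q q_range|].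
  by have := pdT q q_range; rewrite /= schurE.
by rewrite (size_cliques_gt0 po) leqnn.
Qed.
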